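(* Let $\Lambda$ be a strongly connected finite $k$-graph. Then $\Lambda$ is aperiodic if and only if $\operatorname{Per}\Lambda=\{0\}$.
   Context: A $k$-graph is a countable category $\Lambda$ with a functor $d:\Lambda\to\mathbb{N}^k$ such that whenever $d(\lambda)=m+n$ there are unique $\mu,\nu$ with $d(\mu)=m$, $d(\nu)=n$, $\lambda=\mu\nu$. $\Lambda^n=d^{-1}(n)$, $\Lambda^0$ = vertices, $r,s$ range and source. Standing convention: $\Lambda^{e_i}\neq\emptyset$ for each $i$. Finite: each $\Lambda^n$ finite; strongly connected: $v\Lambda w\neq\emptyset$ for all vertices. Infinite paths: degree-preserving functors $x:\Omega_k\to\Lambda$, where $\Omega_k=\{(m,n)\in\mathbb{N}^k\times\mathbb{N}^k:m\le n\}$ with $r(m,n)=(m,m)$, $s(m,n)=(n,n)$, $(m,n)(n,p)=(m,p)$, $d(m,n)=n-m$; $\Lambda^\infty$ their set; $\sigma^n(x)(p,q)=x(n+p,n+q)$; $Z(v)=\{x\in\Lambda^\infty:x(0,0)=v\}$. $\Lambda$ is aperiodic if for each $v\in\Lambda^0$ there is $x\in Z(v)$ with $\sigma^m(x)\neq\sigma^n(x)$ for all $m\neq n$ in $\mathbb{N}^k$. $\operatorname{Per}\Lambda=\{m-n:m,n\in\mathbb{N}^k,\ \sigma^m(x)=\sigma^n(x)\ \forall x\in\Lambda^\infty\}$. *)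

From mathcomp Require Import all_boot all_algebra.
From Stdlib Require List.
Set Implicit Arguments. Unset Strict Implicit. Unset Printing Implicit Defensive.

(** N^k and Z^k as finite functions on 'I_k (Leibniz = extensional equality). *)
Definition NN (k : nat) := {ffun 'I_k -> nat}.
Definition ZZ (k : nat) := {ffun 'I_k -> int}.

Definition nn0 {k} : NN k := [ffun _ => 0%N].
Definition nnadd {k} (m n : NN k) : NN k := [ffun i => (m i + n i)%N].
Definition nnsub {k} (m n : NN k) : NN k := [ffun i => (m i - n i)%N].
Definition nnle {k} (m n : NN k) : Prop := forall i, (m i <= n i)%N.
Definition nne {k} (i : 'I_k) : NN k := [ffun j => (j == i : nat)].
Definition zzdiff {k} (m n : NN k) : ZZ k := [ffun i => (Posz (m i) - Posz (n i))%R].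
Definition zz0 {k} : ZZ k := [ffun _ => 0%R].

(** Composition is a total function, only meaningful on composable pairs
    (s mu = r nu); "kcomp mu nu" is the composite mu nu (first nu, then mu). *)
Record kgraph_data (k : nat) := KGraphData {
  kV : Type;
  kM : Type;
  kr : kM -> kV;
  ks : kM -> kV;
  kid : kV -> kM;
  kcomp : kM -> kM -> kM;
  kd : kM -> NN k
}.

Section KGraph.
Variables (k : nat) (L : kgraph_data k).
Local Notation V := (kV L).
Local Notation M := (kM L).
Local Notation r := (@kr k L).
Local Notation s := (@ks k L).
Local Notation idm := (@kid k L).
Local Notation comp := (@kcomp k L).
Local Notation d := (@kd k L).

Definition is_countable_category : Prop :=
  [/\ exists f : M -> nat, injective f,
      forall v, r (idm v) = v /\ s (idm v) = v,
      forall mu nu, s mu = r nu -> r (comp mu nu) = r mu /\ s (comp mu nu) = s nu,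
      forall mu, comp (idm (r mu)) mu = mu /\ comp mu (idm (s mu)) = mu &
      forall la mu nu, s la = r mu -> s mu = r nu ->
        comp (comp la mu) nu = comp la (comp mu nu)].

Definition is_degree_functor : Prop :=
  (forall v, d (idm v) = nn0) /\
  (forall mu nu, s mu = r nu -> d (comp mu nu) = nnadd (d mu) (d nu)).

Definition unique_factorisation : Prop :=
  forall la (m n : NN k), d la = nnadd m n ->
    exists mu nu, [/\ d mu = m, d nu = n, s mu = r nu & la = comp mu nu] /\
      forall mu' nu', d mu' = m -> d nu' = n -> s mu' = r nu' ->
        la = comp mu' nu' -> mu' = mu /\ nu' = nu.

(** standing convention: Lambda^{e_i} is nonempty for each i *)
Definition edges_nonempty : Prop := forall i : 'I_k, exists la, d la = nne i.

Definition is_kgraph : Prop :=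
  [/\ is_countable_category, is_degree_functor, unique_factorisation
    & edges_nonempty].

Definition kgraph_finite : Prop :=
  forall n : NN k, exists l : list M, forall la, d la = n -> List.In la l.

Definition strongly_connected : Prop :=
  forall v w : V, exists la, r la = v /\ s la = w.

(** Infinite paths: degree-preserving functors Omega_k -> Lambda, given by
    their values x m n = x(m,n) on the morphisms (m,n), m <= n, of Omega_k
    (values at pairs with m not <= n are irrelevant junk). *)
Definition is_inf_path (x : NN k -> NN k -> M) : Prop :=
  [/\ forall m, x m m = idm (r (x m m)),
      forall m n p, nnle m n -> nnle n p ->
        s (x m n) = r (x n p) /\ x m p = comp (x m n) (x n p) &
      forall m n, nnle m n -> d (x m n) = nnsub n m].

Definition in_Z (v : V) (x : NN k -> NN k -> M) : Prop := r (x nn0 nn0) = v.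

Definition shift (n : NN k) (x : NN k -> NN k -> M) : NN k -> NN k -> M :=
  fun p q => x (nnadd n p) (nnadd n q).

Definition path_eq (x y : NN k -> NN k -> M) : Prop :=
  forall p q, nnle p q -> x p q = y p q.

Definition aperiodic : Prop :=
  forall v : V, exists x, is_inf_path x /\ in_Z v x /\
    forall m n : NN k, m <> n -> ~ path_eq (shift m x) (shift n x).

Definition in_Per (z : ZZ k) : Prop :=
  exists m n : NN k, z = zzdiff m n /\
    forall x, is_inf_path x -> path_eq (shift m x) (shift n x).

End KGraph.

From mathcomp Require Import all_boot all_algebra.
From mathcomp Require Import zify.
From Stdlib Require Import ClassicalEpsilon Classical.
Set Implicit Arguments. Unset Strict Implicit. Unset Printing Implicit Defensive.

(** If Per = {0}, then for each pair m <> n some infinite path x has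
    sigma^m x <> sigma^n x, and by strong connectivity (prepending a path)
    one can take x to start at any prescribed vertex.  Such a witness is
    already visible on a finite initial segment of x.  Enumerating all pairs
    (m, n), we build an increasing chain of finite paths from v whose j-th
    member carries the witness for the j-th pair; its union is an infinite
    path from v that is aperiodic.  Conversely, an aperiodic path rules out
    every nonzero period. *)

Section NNArith.
Variable k : nat.

Definition nnlt (m n : NN k) : Prop := forall i, (m i < n i)%N.
Definition nncst (j : nat) : NN k := [ffun _ => j].
Definition nnmax (m : NN k) : nat := (\max_(i < k) m i)%N.

Lemma nnadd0n (n : NN k) : nnadd nn0 n = n.
Proof. by apply/ffunP => i; rewrite !ffunE. Qed.

Lemma nnsubn0 (n : NN k) : nnsub n nn0 = n.
Proof. by apply/ffunP => i; rewrite !ffunE subn0. Qed.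

Lemma nnsubnn (n : NN k) : nnsub n n = nn0.
Proof. by apply/ffunP => i; rewrite !ffunE subnn. Qed.

Lemma nnaddKn (m n : NN k) : nnsub (nnadd m n) m = n.
Proof. by apply/ffunP => i; rewrite !ffunE addKn. Qed.

Lemma nnsubnKC (m n : NN k) : nnle m n -> nnadd m (nnsub n m) = n.
Proof. by move=> le_mn; apply/ffunP => i; rewrite !ffunE subnKC. Qed.

Lemma nnaddCA (m n p : NN k) : nnadd m (nnadd n p) = nnadd n (nnadd m p).
Proof. by apply/ffunP => i; rewrite !ffunE addnCA. Qed.

Lemma nnle_refl (m : NN k) : nnle m m.
Proof. by []. Qed.

Lemma nnle_trans (m n p : NN k) : nnle m n -> nnle n p -> nnle m p.
Proof. by move=> le_mn le_np i; apply: leq_trans (le_mn i) (le_np i). Qed.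

Lemma nnle0n (m : NN k) : nnle nn0 m.
Proof. by move=> i; rewrite ffunE. Qed.

Lemma nnle_addr (m n : NN k) : nnle m (nnadd m n).
Proof. by move=> i; rewrite ffunE leq_addr. Qed.

Lemma nnle_add2l (p m n : NN k) : nnle m n -> nnle (nnadd p m) (nnadd p n).
Proof. by move=> le_mn i; rewrite !ffunE leq_add2l. Qed.

Lemma nnlt_addr (m n : NN k) : nnlt m (nnadd m (nnadd (nncst 1) n)).
Proof. by move=> i; rewrite !ffunE; lia. Qed.

Lemma nnle_max (m : NN k) : nnle m (nncst (nnmax m)).
Proof. by move=> i; rewrite ffunE; apply: (leq_bigmax i). Qed.

Lemma zzdiff_eq0 (m n : NN k) : zzdiff m n = zz0 <-> m = n.
Proof.
split=> [eq0|->]; last by apply/ffunP => i; rewrite !ffunE GRing.subrr.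
apply/ffunP => i; have /eqP := congr1 (fun z : ZZ k => z i) eq0.
by rewrite !ffunE GRing.subr_eq0 => /eqP [].
Qed.

End NNArith.

Section KGraphPaths.
Variables (k : nat) (L : kgraph_data k).
Local Notation V := (kV L).
Local Notation M := (kM L).
Local Notation r := (@kr k L).
Local Notation s := (@ks k L).
Local Notation idm := (@kid k L).
Local Notation comp := (@kcomp k L).
Local Notation d := (@kd k L).
Local Notation path := (NN k -> NN k -> M).
Hypothesis L_cat : is_countable_category L.
Hypothesis L_deg : is_degree_functor L.
Hypothesis L_fact : unique_factorisation L.

Lemma r_idm v : r (idm v) = v. Proof. by case: L_cat => _ /(_ v) []. Qed.
Lemma s_idm v : s (idm v) = v. Proof. by case: L_cat => _ /(_ v) []. Qed.
Lemma r_comp a b : s a = r b -> r (comp a b) = r a.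
Proof. by case: L_cat => _ _ comp_st _ _ /comp_st []. Qed.
Lemma s_comp a b : s a = r b -> s (comp a b) = s b.
Proof. by case: L_cat => _ _ comp_st _ _ /comp_st []. Qed.
Lemma comp_idml a : comp (idm (r a)) a = a.
Proof. by case: L_cat => _ _ _ /(_ a) []. Qed.
Lemma comp_idmr a : comp a (idm (s a)) = a.
Proof. by case: L_cat => _ _ _ /(_ a) []. Qed.
Lemma kcompA a b c : s a = r b -> s b = r c -> comp (comp a b) c = comp a (comp b c).
Proof. by case: L_cat => _ _ _ _; apply. Qed.
Lemma d_idm v : d (idm v) = nn0. Proof. by case: L_deg. Qed.
Lemma d_comp a b : s a = r b -> d (comp a b) = nnadd (d a) (d b).
Proof. by case: L_deg => _; apply. Qed.

Lemma deg0_idm a : d a = nn0 -> a = idm (r a).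
Proof.
move=> da0; have d00 : d a = nnadd nn0 nn0 by rewrite nnadd0n.
have [mu [nu [_ uniq_fact]]] := L_fact d00.
have [-> _] := uniq_fact (idm (r a)) a (d_idm _) da0 (s_idm _) (esym (comp_idml a)).
by have [-> _] :=
  uniq_fact a (idm (s a)) da0 (d_idm _) (esym (r_idm _)) (esym (comp_idmr a)).
Qed.

Definition factorises (a : M) (m : NN k) (p : M * M) : Prop :=
  [/\ d p.1 = m, s p.1 = r p.2 & a = comp p.1 p.2].

(** [(pre a m, suf a m)] is the factorisation of [a] with [d (pre a m) = m];
    it is junk unless [nnle m (d a)]. *)
Definition factor (a : M) (m : NN k) : M * M :=
  epsilon (inhabits (a, a)) (factorises a m).
Definition pre (a : M) (m : NN k) : M := (factor a m).1.
Definition suf (a : M) (m : NN k) : M := (factor a m).2.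

Lemma factor_uniq a m p q : factorises a m p -> factorises a m q -> p = q.
Proof.
case: p q => p1 p2 [q1 q2] [/= dp1 sp1 ap] [/= dq1 sq1 aq].
have da : d a = nnadd m (d p2) by rewrite ap d_comp // dp1.
have dq2 : d q2 = d p2.
  have : d a = nnadd m (d q2) by rewrite aq d_comp // dq1.
  by rewrite da => /(congr1 (nnsub^~ m)); rewrite !nnaddKn.
have [mu [nu [_ uniq_fact]]] := L_fact da.
have [-> ->] := uniq_fact p1 p2 dp1 erefl sp1 ap.
by have [-> ->] := uniq_fact q1 q2 dq1 dq2 sq1 aq.
Qed.

Lemma pre_sufP a m : nnle m (d a) ->
  [/\ d (pre a m) = m, s (pre a m) = r (suf a m), a = comp (pre a m) (suf a m)
    & d (suf a m) = nnsub (d a) m].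
Proof.
move=> le_m_da.
have [/= dp sp ap] : factorises a m (factor a m).
  apply: epsilon_spec.
  have [mu [nu [[dmu _ smu amu] _]]] := L_fact (esym (nnsubnKC le_m_da)).
  by exists (mu, nu).
by split=> //; rewrite [in RHS]ap d_comp // dp nnaddKn.
Qed.

Lemma pre_suf_comp b c m : s b = r c -> d b = m ->
  pre (comp b c) m = b /\ suf (comp b c) m = c.
Proof.
move=> sb db; have le_m : nnle m (d (comp b c)).
  by rewrite d_comp // db; apply: nnle_addr.
have [dp sp ap _] := pre_sufP le_m.
by rewrite /pre /suf (@factor_uniq (comp b c) m (factor (comp b c) m) (b, c)).
Qed.

Lemma r_pre a m : nnle m (d a) -> r (pre a m) = r a.
Proof. by move=> /pre_sufP [_ sp ap _]; rewrite {2}ap r_comp. Qed.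

Lemma s_suf a m : nnle m (d a) -> s (suf a m) = s a.
Proof. by move=> /pre_sufP [_ sp ap _]; rewrite {2}ap s_comp. Qed.

Lemma r_suf0 a : r (suf a nn0) = r a.
Proof.
have [dp sp _ _] := pre_sufP (nnle0n (d a)).
by rewrite -sp (deg0_idm dp) s_idm r_pre //; apply: nnle0n.
Qed.

Definition extends (a b : M) : Prop := exists nu, s a = r nu /\ b = comp a nu.

Lemma extends_refl a : extends a a.
Proof. by exists (idm (s a)); rewrite r_idm comp_idmr. Qed.

Lemma extends_trans a b c : extends a b -> extends b c -> extends a c.
Proof.
move=> [nu [sa ->]] [mu [sb ->]]; rewrite s_comp // in sb.
by exists (comp nu mu); rewrite r_comp // kcompA.
Qed.

Lemma pre_extends a b m : extends a b -> nnle m (d a) -> pre b m = pre a m.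
Proof.
move=> [nu [sa ->]] le_m; have [dp sp ap _] := pre_sufP le_m.
have s_suf_nu : s (suf a m) = r nu by rewrite s_suf.
have -> : comp a nu = comp (pre a m) (comp (suf a m) nu) by rewrite -kcompA // -ap.
by case: (pre_suf_comp (c := comp (suf a m) nu) _ dp); rewrite ?r_comp.
Qed.

Lemma pre_pre a m n : nnle m n -> nnle n (d a) -> pre (pre a n) m = pre a m.
Proof.
move=> le_mn le_n; have [dp _ _ _] := pre_sufP le_n.
by rewrite -(pre_extends _ (b := a)) ?dp //; exists (suf a n); case: (pre_sufP le_n).
Qed.

Lemma pre_suf_shift l w m : s l = r w -> nnle m (d w) ->
  pre (comp l w) (nnadd (d l) m) = comp l (pre w m) /\
  suf (comp l w) (nnadd (d l) m) = suf w m.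
Proof.
move=> slw le_m; have [dp sp wp _] := pre_sufP le_m.
have sl : s l = r (pre w m) by rewrite r_pre.
have -> : comp l w = comp (comp l (pre w m)) (suf w m) by rewrite kcompA // -wp.
by apply: pre_suf_comp; rewrite ?s_comp ?d_comp ?dp.
Qed.

Lemma suf_split a m n : nnle m n -> nnle n (d a) ->
  s (suf (pre a n) m) = r (suf a n) /\
  suf a m = comp (suf (pre a n) m) (suf a n).
Proof.
move=> le_mn le_n; have [dp sp ap _] := pre_sufP le_n.
have le_m : nnle m (d (pre a n)) by rewrite dp.
have [dq sq pq _] := pre_sufP le_m.
have ss : s (suf (pre a n) m) = r (suf a n) by rewrite s_suf.
split=> //; rewrite {1}ap {1}pq kcompA //.
by case: (pre_suf_comp (c := comp (suf (pre a n) m) (suf a n)) _ dq); rewrite ?r_comp.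
Qed.

(** [seg a m n] is the segment [a(m, n)] of [a], for [m <= n <= d a]. *)
Definition seg (a : M) (m n : NN k) : M := suf (pre a n) m.

Lemma seg_deg a m n : nnle m n -> nnle n (d a) -> d (seg a m n) = nnsub n m.
Proof.
move=> le_mn le_n; have [dp _ _ _] := pre_sufP le_n.
have le_m : nnle m (d (pre a n)) by rewrite dp.
by have [_ _ _ ->] := pre_sufP le_m; rewrite dp.
Qed.

Lemma seg_idm a m : nnle m (d a) -> seg a m m = idm (r (seg a m m)).
Proof. by move=> le_m; apply: deg0_idm; rewrite seg_deg ?nnsubnn. Qed.

Lemma seg_comp a m n p : nnle m n -> nnle n p -> nnle p (d a) ->
  s (seg a m n) = r (seg a n p) /\ seg a m p = comp (seg a m n) (seg a n p).
Proof.
move=> le_mn le_np le_p; have [dp _ _ _] := pre_sufP le_p.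
by rewrite /seg -(pre_pre le_np le_p); apply: suf_split; rewrite ?dp.
Qed.

Lemma seg_extends a b m n : extends a b -> nnle n (d a) -> seg b m n = seg a m n.
Proof. by move=> ab le_n; rewrite /seg (pre_extends ab le_n). Qed.

Lemma seg_r0 a : r (seg a nn0 nn0) = r a.
Proof. by rewrite /seg r_suf0 r_pre //; apply: nnle0n. Qed.

Lemma seg_shift l w m n : s l = r w -> nnle m n -> nnle n (d w) ->
  seg (comp l w) (nnadd (d l) m) (nnadd (d l) n) = seg w m n.
Proof.
move=> slw le_mn le_n; have [dp _ _ _] := pre_sufP le_n.
have slp : s l = r (pre w n) by rewrite r_pre.
have le_m : nnle m (d (pre w n)) by rewrite dp.
rewrite /seg; have [-> _] := pre_suf_shift slw le_n.
by have [_ ->] := pre_suf_shift slp le_m.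
Qed.

Lemma inf_path_r y m n : is_inf_path y -> nnle m n -> r (y m n) = r (y m m).
Proof.
move=> [_ y_comp _] le_mn; have [s_mm ->] := y_comp m m n (nnle_refl m) le_mn.
by rewrite r_comp.
Qed.

Lemma inf_path_d0 y n : is_inf_path y -> d (y nn0 n) = n.
Proof. by move=> [_ _ y_deg]; rewrite y_deg ?nnsubn0 //; apply: nnle0n. Qed.

Lemma seg_inf_path y m n p : is_inf_path y -> nnle m n -> nnle n p ->
  seg (y nn0 p) m n = y m n.
Proof.
move=> y_inf le_mn le_np; have [_ y_comp _] := y_inf.
have [s0n ->] := y_comp _ _ _ (nnle0n n) le_np.
rewrite /seg; have [-> _] := pre_suf_comp s0n (inf_path_d0 n y_inf).
have [s0m ->] := y_comp _ _ _ (nnle0n m) le_mn.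
by have [_ ->] := pre_suf_comp s0m (inf_path_d0 m y_inf).
Qed.

Definition lim_path (f : nat -> M) (m n : NN k) : M := seg (f (nnmax n)) m n.

Section LimPath.
Variable f : nat -> M.
Hypothesis f_extends : forall j, extends (f j) (f j.+1).
Hypothesis f_deg : forall j, nnle (nncst k j) (d (f j)).

Lemma extends_chain j j' : (j <= j')%N -> extends (f j) (f j').
Proof.
move=> /subnKC <-; elim: (j' - j)%N => [|t IH].
  by rewrite addn0; apply: extends_refl.
by rewrite addnS; apply: extends_trans IH (f_extends _).
Qed.

Lemma lim_path_seg j m n : nnle n (d (f j)) -> lim_path f m n = seg (f j) m n.
Proof.
have le_n : nnle n (d (f (nnmax n))) := nnle_trans (nnle_max n) (f_deg _).
move=> le_nj; rewrite /lim_path.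
by case: (leqP (nnmax n) j) => [|/ltnW] le; rewrite (seg_extends _ (extends_chain le)).
Qed.

Lemma lim_path_inf : is_inf_path (lim_path f).
Proof.
have le_n n : nnle n (d (f (nnmax n))) := nnle_trans (nnle_max n) (f_deg _).
split.
- by move=> m; apply: seg_idm.
- move=> m n p le_mn le_np; have le_p := le_n p.
  rewrite !(lim_path_seg _ le_p) (lim_path_seg _ (nnle_trans le_np le_p)).
  exact: seg_comp.
- by move=> m n le_mn; rewrite /lim_path seg_deg.
Qed.

Lemma lim_path_r0 : r (lim_path f nn0 nn0) = r (f 0).
Proof. by rewrite (lim_path_seg (j := 0)) ?seg_r0 //; apply: nnle0n. Qed.

End LimPath.

Lemma comp_inf_path l y p : is_inf_path y -> s l = r (y nn0 nn0) ->
  [/\ s l = r (y nn0 p), d (comp l (y nn0 p)) = nnadd (d l) p &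
   forall m n, nnle m n -> nnle n p ->
     seg (comp l (y nn0 p)) (nnadd (d l) m) (nnadd (d l) n) = y m n].
Proof.
move=> y_inf sl; have sl' : s l = r (y nn0 p) by rewrite (inf_path_r y_inf (nnle0n p)).
split=> //; first by rewrite d_comp // inf_path_d0.
move=> m n le_mn le_np; rewrite seg_shift ?inf_path_d0 //.
exact: seg_inf_path.
Qed.

Lemma extends_comp_inf_path l y p q : is_inf_path y -> s l = r (y nn0 nn0) ->
  nnle p q -> extends (comp l (y nn0 p)) (comp l (y nn0 q)).
Proof.
move=> y_inf sl le_pq; have [_ y_comp _] := y_inf.
have [s0p ->] := y_comp _ _ _ (nnle0n p) le_pq.
have [slp _ _] := comp_inf_path p y_inf sl.
by exists (y p q); rewrite s_comp // kcompA.
Qed.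

Definition cat_path (l : M) (y : path) : path :=
  lim_path (fun j => comp l (y nn0 (nncst k j))).

Lemma cat_pathP l y : is_inf_path y -> s l = r (y nn0 nn0) ->
  [/\ is_inf_path (cat_path l y), r (cat_path l y nn0 nn0) = r l &
   forall m n, nnle m n -> cat_path l y (nnadd (d l) m) (nnadd (d l) n) = y m n].
Proof.
move=> y_inf sl; set f := fun j => comp l (y nn0 (nncst k j)).
have f_ext j : extends (f j) (f j.+1).
  by apply: extends_comp_inf_path => // i; rewrite !ffunE.
have f_deg j : nnle (nncst k j) (d (f j)).
  have [_ -> _] := comp_inf_path (nncst k j) y_inf sl.
  by move=> i; rewrite !ffunE leq_addl.
split; first exact: lim_path_inf.
  have [sl0 _ _] := comp_inf_path (nncst k 0) y_inf sl.
  by rewrite lim_path_r0 // /f r_comp.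
move=> m n le_mn; set J := nnmax (nnadd (d l) n).
have le_n : nnle n (nncst k J).
  by move=> i; have := nnle_max (nnadd (d l) n) i; rewrite !ffunE; lia.
have [_ _ seg_f] := comp_inf_path (nncst k J) y_inf sl.
exact: seg_f.
Qed.

Lemma not_path_eq_shift (y : path) m n : ~ path_eq (shift m y) (shift n y) ->
  exists c e, nnle c e /\ y (nnadd m c) (nnadd m e) <> y (nnadd n c) (nnadd n e).
Proof.
move=> neq; apply: NNPP => no_wit; apply: neq => c e le_ce; apply: NNPP => ne.
by apply: no_wit; exists c, e.
Qed.

(** [b] exhibits, inside its segments, that [sigma^m x <> sigma^n x] for
    every infinite path [x] extending [b]. *)
Definition separates (b : M) (m n : NN k) : Prop :=
  exists c e, [/\ nnle c e, nnle (nnadd m e) (d b), nnle (nnadd n e) (d b) &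
    seg b (nnadd m c) (nnadd m e) <> seg b (nnadd n c) (nnadd n e)].

Definition diag_step (j : nat) (a b : M) : Prop :=
  [/\ extends a b, nnlt (d a) (d b) &
    forall m n, unpickle j = Some (m, n) -> m <> n -> separates b m n].

Section TrivialPeriodicity.
Hypothesis L_sc : strongly_connected L.
Hypothesis L_per : forall z : ZZ k, in_Per L z <-> z = zz0.

Lemma nonperiodic_path_at w m n : m <> n ->
  exists y, [/\ is_inf_path y, r (y nn0 nn0) = w & ~ path_eq (shift m y) (shift n y)].
Proof.
move=> neq_mn.
have [x [x_inf x_neq]] :
    exists x : path, is_inf_path x /\ ~ path_eq (shift m x) (shift n x).
  apply: NNPP => none; apply/neq_mn/zzdiff_eq0/L_per.
  exists m, n; split=> // x x_inf; apply: NNPP => x_neq.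
  by apply: none; exists x.
have [l [rl sl]] := L_sc w (r (x nn0 nn0)).
have [y_inf ry catP] := cat_pathP x_inf sl.
exists (cat_path l x); split=> //; first by rewrite ry.
move=> y_eq; apply: x_neq => c e le_ce.
have le_cpe p : nnle (nnadd p c) (nnadd p e) := nnle_add2l p le_ce.
rewrite /shift -(catP _ _ (le_cpe m)) -(catP _ _ (le_cpe n)).
have := y_eq _ _ (le_cpe (d l)).
by rewrite /shift !(nnaddCA (d l)).
Qed.

Lemma inf_path_at w : exists y, is_inf_path y /\ r (y nn0 nn0) = w.
Proof.
case: (classic (exists i : 'I_k, True)) => [[i _]|no_index].
  have neq : nne i <> nn0.
    by move=> /(congr1 (fun z : NN k => z i)); rewrite !ffunE eqxx.
  by have [y [y_inf ry _]] := nonperiodic_path_at w neq; exists y.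
exists (fun _ _ => idm w); split; last exact: r_idm.
split.
- by move=> m; rewrite r_idm.
- by move=> m n p _ _; rewrite r_idm s_idm; split=> //; rewrite -{2}(r_idm w) comp_idml.
- by move=> m n _; rewrite d_idm; apply/ffunP => i; case: no_index; exists i.
Qed.

Lemma extend_strictly a : exists b, extends a b /\ nnlt (d a) (d b).
Proof.
have [y [y_inf ry]] := inf_path_at (s a).
set Q := nnadd (nncst k 1) nn0.
have [saQ dQ _] := comp_inf_path Q y_inf (esym ry).
by exists (comp a (y nn0 Q)); rewrite dQ; split; [exists (y nn0 Q) | apply: nnlt_addr].
Qed.

Lemma extend_separating a m n : m <> n ->
  exists b, [/\ extends a b, nnlt (d a) (d b) & separates b m n].
Proof.
move=> neq_mn; have [y [y_inf ry y_neq]] := nonperiodic_path_at (s a) neq_mn.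
have [c [e [le_ce neq_ce]]] := not_path_eq_shift y_neq.
set Q := nnadd (nncst k 1) (nnadd (nnadd m n) e).
have le_meQ : nnle (nnadd m e) Q by move=> i; rewrite !ffunE; lia.
have le_neQ : nnle (nnadd n e) Q by move=> i; rewrite !ffunE; lia.
have [saQ dQ segQ] := comp_inf_path Q y_inf (esym ry).
exists (comp a (y nn0 Q)); rewrite dQ; split; first by exists (y nn0 Q).
  exact: nnlt_addr.
exists (nnadd (d a) c), (nnadd (d a) e); split.
- exact: nnle_add2l.
- by rewrite dQ (nnaddCA m); apply: nnle_add2l.
- by rewrite dQ (nnaddCA n); apply: nnle_add2l.
- by rewrite !(nnaddCA _ (d a)) !segQ //; apply: nnle_add2l.
Qed.

Lemma diag_step_exists j a : exists b, diag_step j a b.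
Proof.
case: (classic (exists m n : NN k, unpickle j = Some (m, n) /\ m <> n)) =>
    [[m [n [pick_j neq_mn]]]|none].
  have [b [ab lt_ab sep]] := extend_separating a neq_mn.
  by exists b; split=> // m' n'; rewrite pick_j => -[<- <-].
have [b [ab lt_ab]] := extend_strictly a.
by exists b; split=> // m n pick_j neq_mn; case: none; exists m, n.
Qed.

Fixpoint diag_seq (v : V) (j : nat) : M :=
  if j is j'.+1 then epsilon (inhabits (idm v)) (diag_step j' (diag_seq v j'))
  else idm v.

Lemma diag_seq_step v j : diag_step j (diag_seq v j) (diag_seq v j.+1).
Proof. exact: epsilon_spec (diag_step_exists _ _). Qed.

Lemma Per_trivial_aperiodic : aperiodic L.
Proof.
move=> v; set f := diag_seq v.
have f_ext j : extends (f j) (f j.+1) by case: (diag_seq_step v j).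
have f_deg j : nnle (nncst k j) (d (f j)).
  elim: j => [|j IH] i; first by rewrite ffunE.
  have [_ lt_f _] := diag_seq_step v j.
  by move: (IH i); rewrite !ffunE => le_j; apply: leq_ltn_trans le_j (lt_f i).
exists (lim_path f); split; first exact: lim_path_inf.
split; first by rewrite /in_Z lim_path_r0 // r_idm.
move=> m n neq_mn eq_mn.
have [_ _ sep] := diag_seq_step v (pickle (m, n)).
have [c [e [le_ce le_m le_n []]]] := sep m n (pickleK _) neq_mn.
rewrite -(lim_path_seg f_ext f_deg _ le_m) -(lim_path_seg f_ext f_deg _ le_n).
exact: eq_mn le_ce.
Qed.

End TrivialPeriodicity.
End KGraphPaths.

Lemma in_Per0 k (L : kgraph_data k) : in_Per L zz0.
Proof. by exists nn0, nn0; split; [exact/esym/zzdiff_eq0 | move=> x _ p q _]. Qed.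

Lemma aperiodic_Per_trivial k (L : kgraph_data k) :
  edges_nonempty L -> aperiodic L -> forall z : ZZ k, in_Per L z <-> z = zz0.
Proof.
move=> edges aper z; split=> [[m [n [-> per]]]|->]; last exact: in_Per0.
apply/zzdiff_eq0; apply: NNPP => neq_mn.
have [i _] : exists i : 'I_k, True.
  apply: NNPP => no_index; apply: neq_mn; apply/ffunP => i.
  by case: no_index; exists i.
have [la _] := edges i.
have [x [x_inf [_ x_aper]]] := aper (kr la).
exact: x_aper neq_mn (per x x_inf).
Qed.

Theorem proposition5p4 (k : nat) (L : kgraph_data k) :
  is_kgraph L -> kgraph_finite L -> strongly_connected L ->
  (aperiodic L <-> (forall z : ZZ k, in_Per L z <-> z = zz0)).
Proof.
move=> [L_cat L_deg L_fact edges] _ L_sc; split.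
- exact: aperiodic_Per_trivial.
- exact: Per_trivial_aperiodic.
Qed.
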